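(* Fix $\lambda>1$. There exists $\beta_0>0$ such that for every $\beta\in[0,\beta_0)$ there exists a value $\alpha_0=\alpha_0(\beta)>0$ such that the sequence $\{\alpha_j\}_{j\ge 0}$ generated from $\alpha_{-1}=0$ and this $\alpha_0$ by the recursion below, together with $a_j^*:=\lambda^{-j}\alpha_j$, satisfies $$a_j^*\approx \mathrm{const}(\beta)\cdot\lambda^{-j/3}\quad\text{as } j\to\infty,$$ i.e. there is a constant $C(\beta)>0$ with $a_j^*/(C(\beta)\lambda^{-j/3})\to 1$ as $j\to\infty$.
   Context: The recursion is as follows. For $\beta>0$ and $n\ge 0$: $$\alpha_{n+1}=-\frac{\lambda}{2\beta}\alpha_n+\sqrt{\Big(\frac{\lambda}{2\beta}\alpha_n\Big)^2+\frac{\lambda}{\beta}\big(\lambda^2\alpha_{n-1}^2+\beta\lambda\alpha_{n-1}\alpha_n+\alpha_n\big)}.$$ For $\beta=0$ and $n\ge0$: $\alpha_{n+1}=1+\lambda^2\frac{\alpha_{n-1}^2}{\alpha_n}$. (These recursions arise from seeking self-similar solutions $a_j(t)=a_j^*/(t-t_0)$ of the dyadic system $\frac{da_j}{dt}=\lambda^j a_{j-1}^2-\lambda^{j+1}a_ja_{j+1}+\beta(\lambda^j a_{j-1}a_j-\lambda^{j+1}a_{j+1}^2)$, $j\ge0$, with boundary condition $a_{-1}\equiv 0$; the relation $a_j^*\approx \mathrm{const}\cdot\lambda^{-j/3}$ means the ratio tends to $1$.) *)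

From Stdlib Require Import Reals.
From Coquelicot Require Import Coquelicot.
Open Scope R_scope.

(* One step of the recursion: given alpha_{n-1} (= am1) and alpha_n (= a),
   return alpha_{n+1}. *)
Definition alpha_step (lam beta am1 a : R) : R :=
  if Rlt_dec 0 beta then
    - (lam / (2 * beta)) * a
    + sqrt ((lam / (2 * beta) * a) ^ 2
            + (lam / beta) * (lam ^ 2 * am1 ^ 2 + beta * lam * am1 * a + a))
  else 1 + lam ^ 2 * (am1 ^ 2 / a).

(* alpha_pair lam beta a0 n = (alpha_{n-1}, alpha_n), starting from
   alpha_{-1} = 0, alpha_0 = a0. *)
Fixpoint alpha_pair (lam beta a0 : R) (n : nat) : R * R :=
  match n with
  | O => (0, a0)
  | S k => let p := alpha_pair lam beta a0 k in
           (snd p, alpha_step lam beta (fst p) (snd p))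
  end.

Definition alpha (lam beta a0 : R) (j : nat) : R := snd (alpha_pair lam beta a0 j).

Definition astar (lam beta a0 : R) (j : nat) : R := / lam ^ j * alpha lam beta a0 j.

(* With [b = beta / lam] the recursion reads
   [alpha_n alpha_(n+1) + b alpha_(n+1)^2 = alpha_n + lam^2 alpha_(n-1)^2 + lam^2 b alpha_(n-1) alpha_n],
   so the ratios [rho_n = alpha_(n+1) / alpha_n] roughly follow [rho_(n+1) = lam^2 / rho_n^2],
   whose fixed point is [rs = lam^(2/3)].  The deviations [ln rho_n - ln rs] roughly double
   and change sign at each step, so the fixed point is repelling and [alpha_0] must be found
   by shooting.  Fix a window [[rs^2/hi, hi]] of ratios: an orbit that leaves it keeps
   alternating outside it, overshooting either at even or at odd indices, and these two
   escape sets of initial values are open and disjoint.  For [beta = 0] each of them is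
   nonempty, and by continuity this persists for small [beta]; by connectedness some
   [alpha_0] between them never escapes.  Along that orbit [alpha_n] grows at least like
   [rs^n], the perturbations are then geometrically small, the deviations decay
   geometrically (the contraction runs backwards in time), and [alpha_n / rs^n] converges
   to some [C > 0], i.e. [a_j^* = lam^(-j) alpha_j ~ C lam^(-j/3)]. *)

From Stdlib Require Import Reals Lra Lia Psatz Classical.
From Coquelicot Require Import Coquelicot.
Open Scope R_scope.

(* With [b = beta / lam], [alpha_step lam beta m a] is the positive root [x] of
   [a * x + b * x ^ 2 = rhs lam b m a] ([alpha_step_next]). *)
Definition rhs (lam b m a : R) : R := a + lam ^ 2 * m ^ 2 + lam ^ 2 * b * m * a.

(* That root, in the rationalised form that stays valid (and continuous) at [b = 0]. *)
Definition next (lam b m a : R) : R :=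
  2 * rhs lam b m a / (a + sqrt (a ^ 2 + 4 * b * rhs lam b m a)).

Definition shift (lam b : R) (p : R * R) : R * R := (snd p, next lam b (fst p) (snd p)).

Fixpoint orbit (lam b : R) (p : R * R) (n : nat) : R * R :=
  match n with O => p | S k => shift lam b (orbit lam b p k) end.

Lemma orbit_succ_r lam b p n : orbit lam b p (S n) = orbit lam b (shift lam b p) n.
Proof. induction n as [|n IH]; [reflexivity|]. cbn [orbit]. now rewrite <- IH. Qed.

Lemma rhs_ge lam b m a : 0 <= b -> 0 <= m -> 0 <= a -> a <= rhs lam b m a.
Proof.
  intros hb hm ha. unfold rhs.
  assert (0 <= b * m * a) by (apply Rmult_le_pos; [apply Rmult_le_pos|]; lra).
  pose proof (pow2_ge_0 lam). pose proof (pow2_ge_0 m). nra.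
Qed.

Lemma next_pos lam b m a : 0 <= b -> 0 <= m -> 0 < a -> 0 < next lam b m a.
Proof.
  intros hb hm ha. pose proof (rhs_ge lam b m a hb hm (Rlt_le _ _ ha)).
  pose proof (sqrt_pos (a ^ 2 + 4 * b * rhs lam b m a)).
  unfold next. apply Rdiv_lt_0_compat; lra.
Qed.

Lemma next_spec lam b m a : 0 <= b -> 0 <= m -> 0 < a ->
  a * next lam b m a + b * next lam b m a ^ 2 = rhs lam b m a.
Proof.
  intros hb hm ha. pose proof (rhs_ge lam b m a hb hm (Rlt_le _ _ ha)).
  unfold next. set (Q := rhs lam b m a) in *.
  assert (hD : 0 <= a ^ 2 + 4 * b * Q) by (assert (0 <= b * Q) by (apply Rmult_le_pos; lra); nra).
  set (t := sqrt (a ^ 2 + 4 * b * Q)).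
  assert (ht : t ^ 2 = a ^ 2 + 4 * b * Q) by (now apply pow2_sqrt).
  assert (0 <= t) by apply sqrt_pos.
  assert (a + t <> 0) by lra.
  field_simplify_eq; [| assumption]. rewrite ht. ring.
Qed.

Lemma quadratic_pos_root_unique a b x y : 0 < a -> 0 <= b -> 0 < x -> 0 < y ->
  a * x + b * x ^ 2 = a * y + b * y ^ 2 -> x = y.
Proof.
  intros ha hb hx hy h.
  assert (hf : (x - y) * (a + b * (x + y)) = 0) by (rewrite <- (Rminus_diag_eq _ _ h); ring).
  assert (0 <= b * (x + y)) by (apply Rmult_le_pos; lra).
  apply Rmult_integral in hf as [|]; lra.
Qed.

Lemma next_b0 lam m a : 0 < a -> next lam 0 m a = (a + lam ^ 2 * m ^ 2) / a.
Proof.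
  intros ha. unfold next, rhs.
  replace (a ^ 2 + 4 * 0 * _) with (a ^ 2) by ring.
  rewrite sqrt_pow2 by lra. field. lra.
Qed.

Lemma alpha_step_next lam beta m a : 0 < lam -> 0 <= beta -> 0 <= m -> 0 < a ->
  alpha_step lam beta m a = next lam (beta / lam) m a.
Proof.
  intros hl hbeta hm ha. unfold alpha_step.
  destruct (Rlt_dec 0 beta) as [hpos|hzero].
  - assert (hb : 0 <= beta / lam) by (apply Rlt_le, Rdiv_lt_0_compat; lra).
    pose proof (rhs_ge lam (beta / lam) m a hb hm (Rlt_le _ _ ha)).
    replace (lam ^ 2 * m ^ 2 + beta * lam * m * a + a) with (rhs lam (beta / lam) m a)
      by (unfold rhs; field; lra).
    set (Q := rhs lam (beta / lam) m a) in *.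
    set (c := lam / (2 * beta) * a).
    assert (hc : 0 < c) by (unfold c; apply Rmult_lt_0_compat; [apply Rdiv_lt_0_compat|]; lra).
    set (D := c ^ 2 + lam / beta * Q).
    assert (hD : c ^ 2 < D)
      by (unfold D; assert (0 < lam / beta * Q) by (apply Rmult_lt_0_compat; [apply Rdiv_lt_0_compat|]; lra); lra).
    assert (hs : sqrt D ^ 2 = D) by (apply pow2_sqrt; nra).
    assert (hcs : c < sqrt D) by (rewrite <- (sqrt_pow2 c) by lra; apply sqrt_lt_1_alt; split; nra).
    replace (- (lam / (2 * beta)) * a) with (- c) by (unfold c; ring).
    apply (quadratic_pos_root_unique a (beta / lam)); [lra | exact hb | lra | now apply next_pos |].
    rewrite next_spec by assumption.
    replace ((- c + sqrt D) ^ 2) with (c ^ 2 - 2 * c * sqrt D + sqrt D ^ 2) by ring.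
    rewrite hs. fold Q. unfold D, c. field. lra.
  - assert (beta = 0) by lra. subst beta.
    replace (0 / lam) with 0 by (field; lra). rewrite next_b0 by lra. field. lra.
Qed.

Lemma orbit_pos lam b p n : 0 <= b -> 0 <= fst p -> 0 < snd p ->
  0 <= fst (orbit lam b p n) /\ 0 < snd (orbit lam b p n).
Proof.
  intros hb h1 h2. induction n as [|n [IH1 IH2]]; [auto|].
  split; [simpl; lra|]. now apply next_pos.
Qed.

Lemma alpha_pair_orbit lam beta a0 n : 0 < lam -> 0 <= beta -> 0 < a0 ->
  alpha_pair lam beta a0 n = orbit lam (beta / lam) (0, a0) n.
Proof.
  intros hl hbeta ha.
  assert (hb : 0 <= beta / lam) by (apply Rmult_le_pos; [lra | apply Rlt_le, Rinv_0_lt_compat; lra]).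
  induction n as [|n IH]; [reflexivity|]. cbn [alpha_pair orbit]. rewrite IH.
  destruct (orbit_pos lam (beta / lam) (0, a0) n hb) as [h1 h2]; simpl; try lra.
  unfold shift. f_equal. now apply alpha_step_next.
Qed.

Lemma continuity_pt_cst (c x : R) : continuity_pt (fun _ => c) x.
Proof. apply continuity_pt_const. now intros u v. Qed.

Lemma continuity_pt_pow_fun f n x : continuity_pt f x -> continuity_pt (fun t => f t ^ n) x.
Proof.
  intros hf. induction n as [|n IH]; [exact (continuity_pt_cst 1 x)|].
  exact (continuity_pt_mult _ _ _ hf IH).
Qed.

Lemma next_continuity_pt lam (B M A : R -> R) t0 :
  continuity_pt B t0 -> continuity_pt M t0 -> continuity_pt A t0 ->
  0 <= B t0 -> 0 <= M t0 -> 0 < A t0 ->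
  continuity_pt (fun t => next lam (B t) (M t) (A t)) t0.
Proof.
  intros cB cM cA hB hM hA.
  pose proof (rhs_ge lam (B t0) (M t0) (A t0) hB hM (Rlt_le _ _ hA)) as hQ.
  assert (cQ : continuity_pt (fun t => rhs lam (B t) (M t) (A t)) t0).
  { unfold rhs.
    repeat first [ apply continuity_pt_plus | apply continuity_pt_mult
                 | apply continuity_pt_pow_fun | apply continuity_pt_cst | assumption ]. }
  assert (hD : 0 <= A t0 ^ 2 + 4 * B t0 * rhs lam (B t0) (M t0) (A t0)).
  { assert (0 <= B t0 * rhs lam (B t0) (M t0) (A t0)) by (apply Rmult_le_pos; lra). nra. }
  pose proof (sqrt_pos (A t0 ^ 2 + 4 * B t0 * rhs lam (B t0) (M t0) (A t0))).
  unfold next. apply continuity_pt_div.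
  - apply continuity_pt_mult; [apply continuity_pt_cst | exact cQ].
  - apply continuity_pt_plus; [exact cA |].
    apply (continuity_pt_comp (fun t => A t ^ 2 + 4 * B t * rhs lam (B t) (M t) (A t)) sqrt).
    + repeat first [ apply continuity_pt_plus | apply continuity_pt_mult
                   | apply continuity_pt_pow_fun | apply continuity_pt_cst | assumption ].
    + now apply continuity_pt_sqrt.
  - lra.
Qed.

Lemma orbit_continuity_pt lam (B M A : R -> R) t0 n :
  continuity_pt B t0 -> continuity_pt M t0 -> continuity_pt A t0 ->
  0 <= B t0 -> 0 <= M t0 -> 0 < A t0 ->
  continuity_pt (fun t => fst (orbit lam (B t) (M t, A t) n)) t0 /\
  continuity_pt (fun t => snd (orbit lam (B t) (M t, A t) n)) t0.
Proof.
  intros cB cM cA hB hM hA. induction n as [|n [IH1 IH2]]; [now split|].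
  split; [exact IH2|].
  destruct (orbit_pos lam (B t0) (M t0, A t0) n hB hM hA) as [h1 h2].
  now apply (next_continuity_pt lam B (fun t => fst (orbit lam (B t) (M t, A t) n))
                                      (fun t => snd (orbit lam (B t) (M t, A t) n))).
Qed.

Lemma continuity_pt_pos_nbhd f x : continuity_pt f x -> 0 < f x ->
  exists d, 0 < d /\ forall y, Rabs (y - x) < d -> 0 < f y.
Proof.
  intros hf hx. destruct (hf (f x) hx) as [d [hd Hd]].
  exists d. split; [exact hd|]. intros y hy.
  destruct (Req_dec y x) as [->|ne]; [exact hx|].
  assert (hxy : Rabs (f y - f x) < f x) by (apply Hd; repeat split; auto).
  apply Rabs_def2 in hxy. lra.
Qed.

Definition escape (lo hi : R) (up : bool) (p : R * R) : Prop :=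
  if up then hi * fst p < snd p else snd p < lo * fst p.

Lemma escape_nbhd lo hi up (F : R -> R * R) t0 :
  continuity_pt (fun t => fst (F t)) t0 -> continuity_pt (fun t => snd (F t)) t0 ->
  escape lo hi up (F t0) -> exists d, 0 < d /\ forall t, Rabs (t - t0) < d -> escape lo hi up (F t).
Proof.
  intros c1 c2. unfold escape. destruct up; intro h.
  - destruct (continuity_pt_pos_nbhd (fun t => snd (F t) - hi * fst (F t)) t0) as [d [hd Hd]].
    + apply continuity_pt_minus; [exact c2 | apply continuity_pt_mult; [apply continuity_pt_cst | exact c1]].
    + simpl. lra.
    + exists d. split; [exact hd|]. intros t ht. specialize (Hd t ht). simpl in Hd. lra.
  - destruct (continuity_pt_pos_nbhd (fun t => lo * fst (F t) - snd (F t)) t0) as [d [hd Hd]].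
    + apply continuity_pt_minus; [apply continuity_pt_mult; [apply continuity_pt_cst | exact c1] | exact c2].
    + simpl. lra.
    + exists d. split; [exact hd|]. intros t ht. specialize (Hd t ht). simpl in Hd. lra.
Qed.

(* [escapes lam lo hi b a0 true]: the orbit of [(alpha_(-1), alpha_0) = (0, a0)] leaves
   the window upwards at an even index or downwards at an odd one; [false]: the opposite
   parities.  Outside the window the ratio alternates sides ([escape_next]), so the two
   kinds of escape exclude each other ([escapes_disjoint]). *)
Definition escapes (lam lo hi b a0 : R) (s : bool) : Prop :=
  exists n, (2 <= n)%nat /\ escape lo hi (Bool.eqb s (Nat.even n)) (orbit lam b (0, a0) n).

Lemma escapes_nbhd lam lo hi s (B A : R -> R) t0 :
  continuity_pt B t0 -> continuity_pt A t0 -> 0 <= B t0 -> 0 < A t0 ->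
  escapes lam lo hi (B t0) (A t0) s ->
  exists d, 0 < d /\ forall t, Rabs (t - t0) < d -> escapes lam lo hi (B t) (A t) s.
Proof.
  intros cB cA hB hA [n [hn Hn]].
  destruct (orbit_continuity_pt lam B (fun _ => 0) A t0 n cB (continuity_pt_cst 0 t0) cA hB
              (Rle_refl 0) hA) as [c1 c2].
  destruct (escape_nbhd lo hi _ (fun t => orbit lam (B t) (0, A t) n) t0 c1 c2 Hn) as [d [hd Hd]].
  exists d. split; [exact hd|]. intros t ht. exists n. split; [exact hn | exact (Hd t ht)].
Qed.

Lemma interval_gap_lt (PL PH : R -> Prop) A B : A < B -> PL A -> PH B ->
  (forall x, A <= x <= B -> PL x -> exists d, 0 < d /\ forall y, Rabs (y - x) < d -> PL y) ->
  (forall x, A <= x <= B -> PH x -> exists d, 0 < d /\ forall y, Rabs (y - x) < d -> PH y) ->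
  (forall x, A <= x <= B -> PL x -> PH x -> False) ->
  exists x, A <= x <= B /\ ~ PL x /\ ~ PH x.
Proof.
  intros hAB hA hB openL openH disj.
  apply NNPP. intro hcover.
  assert (cover : forall x, A <= x <= B -> PL x \/ PH x).
  { intros x hx. apply NNPP. intro h. apply hcover. exists x. tauto. }
  set (E x := A <= x <= B /\ forall y, A <= y <= x -> PL y).
  assert (hEA : E A) by (split; [lra | intros y hy; now replace y with A by lra]).
  destruct (completeness E) as [s [ub lub]].
  { exists B. intros x [hx _]. lra. }
  { now exists A. }
  assert (hAs : A <= s) by now apply ub.
  assert (hsB : s <= B) by (apply lub; intros x [hx _]; lra).
  assert (below : forall y, A <= y < s -> PL y).
  { intros y hy. apply NNPP. intro hy'.
    assert (s <= y); [| lra]. apply lub. intros x [hx hxE].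
    destruct (Rle_lt_dec x y) as [h|h]; [exact h|]. exfalso. apply hy', hxE. lra. }
  destruct (cover s (conj hAs hsB)) as [hs|hs].
  - destruct (openL s (conj hAs hsB) hs) as [d [hd Hd]].
    destruct (Req_dec s B) as [->|ne]; [now apply (disj B); [lra | |] |].
    set (s' := Rmin (s + d / 2) B).
    assert (hs' : s < s' <= s + d / 2) by (split; [apply Rmin_glb_lt; lra | apply Rmin_l]).
    assert (E s').
    { split; [split; [lra | apply Rmin_r] |].
      intros y hy. destruct (Rlt_le_dec y s) as [h|h]; [apply below; lra|].
      apply Hd. apply Rabs_def1; lra. }
    assert (s' <= s) by now apply ub. lra.
  - destruct (openH s (conj hAs hsB) hs) as [d [hd Hd]].
    destruct (Req_dec s A) as [->|ne]; [now apply (disj A); [lra | |] |].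
    set (y := Rmax (s - d / 2) A).
    assert (hy : s - d / 2 <= y < s /\ A <= y) by (repeat split; [apply Rmax_l | apply Rmax_lub_lt; lra | apply Rmax_r]).
    apply (disj y); [lra | apply below; lra | apply Hd, Rabs_def1; lra].
Qed.

Lemma interval_gap (PL PH : R -> Prop) A B : PL A -> PH B ->
  (forall x, Rmin A B <= x <= Rmax A B -> PL x -> exists d, 0 < d /\ forall y, Rabs (y - x) < d -> PL y) ->
  (forall x, Rmin A B <= x <= Rmax A B -> PH x -> exists d, 0 < d /\ forall y, Rabs (y - x) < d -> PH y) ->
  (forall x, Rmin A B <= x <= Rmax A B -> PL x -> PH x -> False) ->
  exists x, Rmin A B <= x <= Rmax A B /\ ~ PL x /\ ~ PH x.
Proof.
  intros hA hB openL openH disj.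
  destruct (Rtotal_order A B) as [hAB|[<-|hBA]].
  - rewrite Rmin_left, Rmax_right in * by lra. now apply interval_gap_lt.
  - rewrite Rmin_left, Rmax_left in * by lra. exfalso. apply (disj A); [lra | |]; assumption.
  - rewrite Rmin_right, Rmax_left in * by lra.
    destruct (interval_gap_lt PH PL B A) as [x [hx [h1 h2]]]; try assumption.
    + intros x hx h1 h2. now apply (disj x).
    + now exists x.
Qed.

Definition in_window (lo hi : R) (al : nat -> R) : Prop :=
  forall n, (1 <= n)%nat -> lo <= al (S n) / al n <= hi.

Definition positive_solution (lam b : R) (al : nat -> R) : Prop :=
  (forall n, 0 < al n) /\
  forall n, al (S n) * al (S (S n)) + b * al (S (S n)) ^ 2 = rhs lam b (al n) (al (S n)).

Lemma orbit_positive_solution lam b a0 : 0 <= b -> 0 < a0 ->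
  positive_solution lam b (fun n => snd (orbit lam b (0, a0) n)).
Proof.
  intros hb ha0.
  assert (hpos : forall n, 0 <= fst (orbit lam b (0, a0) n) /\ 0 < snd (orbit lam b (0, a0) n))
    by (intro n; apply orbit_pos; simpl; lra).
  split; [intro n; apply hpos|]. intro n.
  change (snd (orbit lam b (0, a0) (S (S n))))
    with (next lam b (snd (orbit lam b (0, a0) n)) (snd (orbit lam b (0, a0) (S n)))).
  destruct (hpos n), (hpos (S n)). now apply next_spec.
Qed.

Lemma next_ge lam b th m a : 0 <= b -> 0 <= m -> 0 < a -> 0 < th ->
  b * th ^ 2 <= (1 - th) * a -> th <= next lam b m a.
Proof.
  intros hb hm ha hth h. apply Rnot_lt_le. intro hlt.
  pose proof (next_pos lam b m a hb hm ha). pose proof (next_spec lam b m a hb hm ha).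
  pose proof (rhs_ge lam b m a hb hm (Rlt_le _ _ ha)).
  set (x := next lam b m a) in *.
  assert (b * x ^ 2 <= b * th ^ 2) by (apply Rmult_le_compat_l; [lra | apply pow_incr; lra]).
  assert (a * x < a * th) by (apply Rmult_lt_compat_l; lra).
  lra.
Qed.

Section Propagation.

Variables (lam rs hi b th : R).
(* [th] bounds the orbit from below from index 1 on ([orbit_ge]); in [next_ratio_low],
   [hslack] absorbs the terms [a] and [lam^2 b m a] of [rhs]. *)
Hypotheses (hrs : 1 < rs) (hlam : rs ^ 3 = lam ^ 2) (hhi : 5/4 * rs <= hi)
  (hb : 0 <= b) (hbhi : b * hi <= 1/4) (hth : 0 < th) (hth1 : th < 1)
  (hslack : / th + b * rs ^ 3 + rs ^ 3 / hi <= rs ^ 2).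

(* Since [x / a] is about [rs^3 (m / a)^2], a ratio above [hi] is followed by one
   below [rs^2 / hi], and conversely. *)
Lemma next_ratio_low m a x : th <= m -> 0 < a -> 0 < x ->
  a * x + b * x ^ 2 = rhs lam b m a -> hi * m < a -> x < rs ^ 2 / hi * a.
Proof.
  intros hm ha hx hid h. apply Rnot_le_lt. intro hx2.
  unfold rhs in hid. rewrite <- hlam in hid.
  assert (hhi0 : 0 < hi) by lra.
  assert (hrs3 : 0 < rs ^ 3) by (apply pow_lt; lra).
  assert (hbx : 0 <= b * x ^ 2) by (apply Rmult_le_pos; [lra | apply pow2_ge_0]).
  assert (hax : rs ^ 2 / hi * a * a <= a * x) by (rewrite (Rmult_comm a x); apply Rmult_le_compat_r; lra).
  assert (t1 : hi * a < a * a * / th).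
  { apply (Rmult_lt_reg_r th); [lra|]. replace (a * a * / th * th) with (a * a) by (field; lra).
    assert (hi * th <= hi * m) by (apply Rmult_le_compat_l; lra). nra. }
  assert (t2 : hi * (rs ^ 3 * m ^ 2) < a * a * (rs ^ 3 / hi)).
  { apply (Rmult_lt_reg_r hi); [lra|]. replace (a * a * (rs ^ 3 / hi) * hi) with (rs ^ 3 * (a * a)) by (field; lra).
    replace (hi * (rs ^ 3 * m ^ 2) * hi) with (rs ^ 3 * ((hi * m) * (hi * m))) by ring.
    apply Rmult_lt_compat_l; [lra|]. assert (0 < hi * m) by (apply Rmult_lt_0_compat; lra). nra. }
  assert (t3 : hi * (rs ^ 3 * b * m * a) <= a * a * (b * rs ^ 3)).
  { replace (hi * (rs ^ 3 * b * m * a)) with ((b * rs ^ 3 * a) * (hi * m)) by ring.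
    replace (a * a * (b * rs ^ 3)) with ((b * rs ^ 3 * a) * a) by ring.
    apply Rmult_le_compat_l; [| lra]. apply Rmult_le_pos; [apply Rmult_le_pos|]; lra. }
  assert (t4 : a * a * (/ th + b * rs ^ 3 + rs ^ 3 / hi) <= a * a * rs ^ 2) by (apply Rmult_le_compat_l; nra).
  assert (hi * (rs ^ 2 / hi * a * a) = a * a * rs ^ 2) by (field; lra).
  nra.
Qed.

Lemma next_ratio_high m a x : 0 < a -> 0 < x ->
  a * x + b * x ^ 2 = rhs lam b m a -> a < rs ^ 2 / hi * m -> hi * a < x.
Proof.
  intros ha hx hid h. apply Rnot_le_lt. intro hx2.
  assert (hhi0 : 0 < hi) by lra.
  assert (hm : a * hi / rs ^ 2 < m).
  { apply (Rmult_lt_reg_r (rs ^ 2 / hi)); [apply Rdiv_lt_0_compat; [apply pow_lt|]; lra|].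
    replace (a * hi / rs ^ 2 * (rs ^ 2 / hi)) with a by (field; lra). lra. }
  assert (hm0 : 0 < a * hi / rs ^ 2) by (apply Rdiv_lt_0_compat; [nra | apply pow_lt; lra]).
  assert (e1 : a * x + b * x ^ 2 <= hi * a * a * (1 + b * hi)).
  { assert (a * x <= a * (hi * a)) by (apply Rmult_le_compat_l; lra).
    assert (b * x ^ 2 <= b * (hi * a) ^ 2) by (apply Rmult_le_compat_l; [lra | apply pow_incr; lra]).
    nra. }
  assert (e2 : hi * a * a * (1 + b * hi) <= a * a * hi * hi / rs).
  { replace (a * a * hi * hi / rs) with (hi * a * a * (hi / rs)) by (field; lra).
    apply Rmult_le_compat_l; [nra|]. apply (Rmult_le_reg_r rs); [lra|].
    replace (hi / rs * rs) with hi by (field; lra). nra. }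
  assert (e3 : a * a * hi * hi / rs < lam ^ 2 * m ^ 2).
  { rewrite <- hlam. replace (a * a * hi * hi / rs) with (rs ^ 3 * (a * hi / rs ^ 2) ^ 2) by (field; lra).
    apply Rmult_lt_compat_l; [apply pow_lt; lra|].
    set (y := a * hi / rs ^ 2) in *. simpl. nra. }
  pose proof (rhs_ge lam b m a hb (Rlt_le _ _ (Rlt_trans _ _ _ hm0 hm)) (Rlt_le _ _ ha)).
  assert (0 <= lam ^ 2 * b * m * a).
  { apply Rmult_le_pos; [apply Rmult_le_pos; [apply Rmult_le_pos; [apply pow2_ge_0|]|]|]; lra. }
  unfold rhs in hid. lra.
Qed.

Lemma escape_next up m a : th <= m -> 0 < a ->
  escape (rs ^ 2 / hi) hi up (m, a) -> escape (rs ^ 2 / hi) hi (negb up) (shift lam b (m, a)).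
Proof.
  intros hm ha. pose proof (next_pos lam b m a hb ltac:(lra) ha).
  pose proof (next_spec lam b m a hb ltac:(lra) ha).
  unfold escape, shift; simpl. destruct up; intro h.
  - now apply (next_ratio_low m).
  - now apply (next_ratio_high m).
Qed.

Section Orbit.

Variable a0 : R.
Hypotheses (ha0 : 0 < a0) (hbm : b <= (1 - th) * Rmin 1 a0).

Lemma orbit_ge n : th <= snd (orbit lam b (0, a0) (S n)).
Proof.
  assert (hm1 : Rmin 1 a0 <= 1) by apply Rmin_l.
  assert (hm2 : Rmin 1 a0 <= a0) by apply Rmin_r.
  assert (hbth : b * th <= b) by (rewrite <- (Rmult_1_r b) at 2; apply Rmult_le_compat_l; lra).
  assert (hbth2 : b * th ^ 2 <= b * th) by (apply Rmult_le_compat_l; [lra | simpl; nra]).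
  assert (hbth1 : b * th <= 1 - th).
  { assert ((1 - th) * Rmin 1 a0 <= 1 - th) by (rewrite <- (Rmult_1_r (1 - th)) at 2; apply Rmult_le_compat_l; lra).
    lra. }
  induction n as [|n IH].
  - apply next_ge; simpl; try lra.
    assert ((1 - th) * Rmin 1 a0 <= (1 - th) * a0) by (apply Rmult_le_compat_l; lra). lra.
  - destruct (orbit_pos lam b (0, a0) (S n) hb ltac:(simpl; lra) ltac:(simpl; lra)) as [h1 h2].
    change (th <= next lam b (fst (orbit lam b (0, a0) (S n))) (snd (orbit lam b (0, a0) (S n)))).
    apply next_ge; try lra.
    assert ((1 - th) * th <= (1 - th) * snd (orbit lam b (0, a0) (S n))) by (apply Rmult_le_compat_l; lra).
    assert (b * th ^ 2 <= (1 - th) * th)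
      by (replace (b * th ^ 2) with (th * (b * th)) by ring; rewrite (Rmult_comm (1 - th)); apply Rmult_le_compat_l; lra).
    lra.
Qed.

Lemma orbit_escape_succ s n : (2 <= n)%nat ->
  escape (rs ^ 2 / hi) hi (Bool.eqb s (Nat.even n)) (orbit lam b (0, a0) n) ->
  escape (rs ^ 2 / hi) hi (Bool.eqb s (Nat.even (S n))) (orbit lam b (0, a0) (S n)).
Proof.
  intros hn h.
  assert (hparity : Bool.eqb s (Nat.even (S n)) = negb (Bool.eqb s (Nat.even n)))
    by (rewrite Nat.even_succ, <- Nat.negb_even; now destruct s, (Nat.even n)).
  destruct n as [|[|k]]; [lia | lia |].
  assert (hm : th <= fst (orbit lam b (0, a0) (S (S k)))) by apply orbit_ge.
  destruct (orbit_pos lam b (0, a0) (S (S k)) hb ltac:(simpl; lra) ltac:(simpl; lra)) as [_ ha].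
  rewrite hparity.
  change (orbit lam b (0, a0) (S (S (S k)))) with (shift lam b (orbit lam b (0, a0) (S (S k)))).
  rewrite (surjective_pairing (orbit lam b (0, a0) (S (S k)))) in h |- *.
  now apply escape_next.
Qed.

Lemma orbit_escape_add s n k : (2 <= n)%nat ->
  escape (rs ^ 2 / hi) hi (Bool.eqb s (Nat.even n)) (orbit lam b (0, a0) n) ->
  escape (rs ^ 2 / hi) hi (Bool.eqb s (Nat.even (n + k))) (orbit lam b (0, a0) (n + k)).
Proof.
  intros hn h. induction k as [|k IH]; [now rewrite Nat.add_0_r|].
  rewrite Nat.add_succ_r. apply orbit_escape_succ; [lia | exact IH].
Qed.

Lemma escapes_disjoint :
  escapes lam (rs ^ 2 / hi) hi b a0 true -> escapes lam (rs ^ 2 / hi) hi b a0 false -> False.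
Proof.
  intros [n [hn Hn]] [m [hm Hm]].
  destruct (Nat.max n m) as [|[|k]] eqn:hk; [lia | lia |].
  pose proof (orbit_escape_add true n (S (S k) - n) hn Hn) as Hup.
  pose proof (orbit_escape_add false m (S (S k) - m) hm Hm) as Hdown.
  replace (n + (S (S k) - n))%nat with (S (S k)) in Hup by lia.
  replace (m + (S (S k) - m))%nat with (S (S k)) in Hdown by lia.
  pose proof (orbit_ge k) as hm0.
  change (snd (orbit lam b (0, a0) (S k))) with (fst (orbit lam b (0, a0) (S (S k)))) in hm0.
  assert (rs ^ 2 / hi < hi).
  { apply (Rmult_lt_reg_r hi); [lra|]. replace (rs ^ 2 / hi * hi) with (rs ^ 2) by (field; lra). simpl. nra. }
  assert (0 < (hi - rs ^ 2 / hi) * fst (orbit lam b (0, a0) (S (S k)))) by (apply Rmult_lt_0_compat; lra).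
  unfold escape in Hup, Hdown.
  destruct (Nat.even (S (S k))); cbn [Bool.eqb] in Hup, Hdown; lra.
Qed.

Lemma window_of_no_escape :
  ~ escapes lam (rs ^ 2 / hi) hi b a0 true -> ~ escapes lam (rs ^ 2 / hi) hi b a0 false ->
  in_window (rs ^ 2 / hi) hi (fun n => snd (orbit lam b (0, a0) n)).
Proof.
  intros nup ndown n hn.
  assert (hm : th <= fst (orbit lam b (0, a0) (S n)))
    by (destruct n as [|n]; [lia | apply orbit_ge]).
  change (snd (orbit lam b (0, a0) n)) with (fst (orbit lam b (0, a0) (S n))).
  assert (hup : ~ escape (rs ^ 2 / hi) hi (Bool.eqb true (Nat.even (S n))) (orbit lam b (0, a0) (S n)))
    by (intro h; apply nup; exists (S n); split; [lia | exact h]).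
  assert (hdown : ~ escape (rs ^ 2 / hi) hi (Bool.eqb false (Nat.even (S n))) (orbit lam b (0, a0) (S n)))
    by (intro h; apply ndown; exists (S n); split; [lia | exact h]).
  set (p := orbit lam b (0, a0) (S n)) in *.
  assert (hin : rs ^ 2 / hi * fst p <= snd p <= hi * fst p).
  { unfold escape in hup, hdown.
    destruct (Nat.even (S n)); cbn [Bool.eqb] in hup, hdown; split; lra. }
  split; [apply (Rle_div_r (rs ^ 2 / hi)) | apply Rle_div_l]; lra.
Qed.

End Orbit.

Lemma shooting A B : 0 < A -> 0 < B -> b <= (1 - th) * Rmin 1 (Rmin A B) ->
  escapes lam (rs ^ 2 / hi) hi b A false -> escapes lam (rs ^ 2 / hi) hi b B true ->
  exists a0, 0 < a0 /\ in_window (rs ^ 2 / hi) hi (fun n => snd (orbit lam b (0, a0) n)).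
Proof.
  intros hA hB hbm hlow hhigh.
  assert (hmin : 0 < Rmin A B) by now apply Rmin_glb_lt.
  assert (hx : forall x, Rmin A B <= x -> 0 < x /\ b <= (1 - th) * Rmin 1 x).
  { intros x hx. split; [lra|]. eapply Rle_trans; [exact hbm|].
    apply Rmult_le_compat_l; [lra | now apply Rle_min_compat_l]. }
  assert (hopen : forall s x, Rmin A B <= x -> escapes lam (rs ^ 2 / hi) hi b x s ->
            exists d, 0 < d /\ forall y, Rabs (y - x) < d -> escapes lam (rs ^ 2 / hi) hi b y s).
  { intros s x hmx. destruct (hx x hmx) as [hx0 _].
    exact (escapes_nbhd lam _ _ s (fun _ => b) (fun t => t) x (continuity_pt_cst b x) (continuity_pt_id x) hb hx0). }
  destruct (interval_gap (fun x => escapes lam (rs ^ 2 / hi) hi b x false)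
                         (fun x => escapes lam (rs ^ 2 / hi) hi b x true) A B hlow hhigh)
    as [x [hxAB [nlow nhigh]]].
  - intros x hxAB. apply hopen. lra.
  - intros x hxAB. apply hopen. lra.
  - intros x hxAB hl hh. destruct (hx x ltac:(lra)) as [hx0 hbx]. now apply (escapes_disjoint x).
  - destruct (hx x ltac:(lra)) as [hx0 hbx]. exists x. split; [exact hx0|].
    now apply window_of_no_escape.
Qed.

End Propagation.

Lemma ln_le_sub_1 z : 0 < z -> ln z <= z - 1.
Proof.
  intros hz. apply Rnot_lt_le. intro hlt.
  pose proof (exp_ineq1_le (z - 1)). pose proof (exp_increasing _ _ hlt).
  rewrite exp_ln in * by exact hz. lra.
Qed.

Lemma ln_sub_le x y : 0 < y -> y <= x -> ln x - ln y <= (x - y) / y.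
Proof.
  intros hy hxy. rewrite <- ln_div by lra.
  replace ((x - y) / y) with (x / y - 1) by (field; lra).
  apply ln_le_sub_1, Rdiv_lt_0_compat; lra.
Qed.

Lemma ln_sub_ge x y : 0 < y -> y <= x -> (x - y) / x <= ln x - ln y.
Proof.
  intros hy hxy. pose proof (ln_le_sub_1 (y / x) ltac:(apply Rdiv_lt_0_compat; lra)).
  rewrite ln_div in * by lra.
  replace ((x - y) / x) with (- (y / x - 1)) by (field; lra). lra.
Qed.

Lemma Rabs_ln_sub_le m x y : 0 < m -> m <= x -> m <= y -> Rabs (ln x - ln y) <= Rabs (x - y) / m.
Proof.
  intros hm.
  assert (oriented : forall u v, m <= u -> m <= v -> v <= u -> Rabs (ln u - ln v) <= Rabs (u - v) / m).
  { intros u v hu hv hvu. pose proof (ln_le v u ltac:(lra) hvu).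
    rewrite !Rabs_right by lra.
    apply (Rle_trans _ ((u - v) / v)); [apply ln_sub_le; lra|].
    apply Rmult_le_compat_l; [lra | apply Rinv_le_contravar; lra]. }
  intros hx hy. destruct (Rle_lt_dec y x); [now apply oriented|].
  rewrite Rabs_minus_sym, (Rabs_minus_sym x). apply oriented; lra.
Qed.

Lemma Rabs_sub_le_ln M x y : 0 < x -> 0 < y -> x <= M -> y <= M ->
  Rabs (x - y) <= M * Rabs (ln x - ln y).
Proof.
  assert (oriented : forall u v, 0 < u -> 0 < v -> u <= M -> v <= u -> Rabs (u - v) <= M * Rabs (ln u - ln v)).
  { intros u v hu hv huM hvu. pose proof (ln_le v u hv hvu).
    pose proof (ln_sub_ge u v hv hvu). rewrite !Rabs_right by lra.
    replace (u - v) with (u * ((u - v) / u)) by (field; lra).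
    apply Rmult_le_compat; [lra | apply Rmult_le_pos; [lra | apply Rlt_le, Rinv_0_lt_compat; lra] | lra | lra]. }
  intros hx hy hxM hyM. destruct (Rle_lt_dec y x); [now apply oriented|].
  rewrite Rabs_minus_sym, (Rabs_minus_sym (ln x)). apply oriented; lra.
Qed.

(* Dividing the recursion by [a^2] gives
   [rho' (1 + b rho') = 1/a + lam^2 / rho^2 * (1 + b rho)] with [rho = a/m], [rho' = x/a];
   take logarithms and use [lam^2 = rs^3]. *)
Lemma log_ratio_defect lam rs b m a x : 0 < lam -> 0 < rs -> rs ^ 3 = lam ^ 2 -> 0 <= b ->
  0 < m -> 0 < a -> 0 < x -> a * x + b * x ^ 2 = rhs lam b m a ->
  0 <= (ln (x / a) - ln rs) + 2 * (ln (a / m) - ln rs)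
       - (ln (1 + b * (a / m)) - ln (1 + b * (x / a))) <= (a / m) ^ 2 / (lam ^ 2 * a).
Proof.
  intros hl hrs hlam hb hm ha hx hid.
  set (rho := a / m). set (rho' := x / a).
  assert (hrho : 0 < rho) by (apply Rdiv_lt_0_compat; lra).
  assert (hrho' : 0 < rho') by (apply Rdiv_lt_0_compat; lra).
  assert (hbr : 0 <= b * rho) by (apply Rmult_le_pos; lra).
  assert (hbr' : 0 <= b * rho') by (apply Rmult_le_pos; lra).
  assert (hl2 : 0 < lam ^ 2) by (apply pow_lt; lra).
  set (T := lam ^ 2 / rho ^ 2 * (1 + b * rho)).
  assert (hT : 0 < T) by (apply Rmult_lt_0_compat; [apply Rdiv_lt_0_compat; [| apply pow_lt] |]; lra).
  assert (hia : 0 < / a) by (apply Rinv_0_lt_compat; lra).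
  assert (E1 : rho' * (1 + b * rho') = / a + T).
  { unfold rho', T, rho. apply (Rmult_eq_reg_r (a ^ 2)); [| apply pow_nonzero; lra].
    unfold rhs in hid. field_simplify; try lra. }
  assert (E2 : ln rho' + ln (1 + b * rho') = ln (/ a + T)) by (rewrite <- E1, ln_mult; lra).
  assert (E3 : ln T = 3 * ln rs - 2 * ln rho + ln (1 + b * rho)).
  { unfold T. rewrite <- hlam, ln_mult, ln_div, !ln_pow by (try apply Rdiv_lt_0_compat; try apply pow_lt; lra).
    simpl INR. lra. }
  assert (he0 : ln T <= ln (/ a + T)) by (apply ln_le; lra).
  assert (he1 : ln (/ a + T) - ln T <= rho ^ 2 / (lam ^ 2 * a)).
  { eapply Rle_trans; [apply ln_sub_le; lra|].
    replace ((/ a + T - T) / T) with (rho ^ 2 / (lam ^ 2 * a) / (1 + b * rho))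
      by (unfold T; field; repeat split; try apply pow_nonzero; lra).
    unfold Rdiv at 1. rewrite <- (Rmult_1_r (rho ^ 2 / (lam ^ 2 * a))) at 2.
    apply Rmult_le_compat_l.
    - apply Rlt_le, Rdiv_lt_0_compat; [apply pow_lt | apply Rmult_lt_0_compat]; lra.
    - rewrite <- Rinv_1. apply Rinv_le_contravar; lra. }
  split; lra.
Qed.

(* The contraction runs backwards in time: the deviation at step [n] is controlled by
   the one at step [n + 1], with a factor close to [1/2]. *)
Lemma log_ratio_contraction lam rs hi b m a x : 0 < lam -> 1 < rs -> rs ^ 3 = lam ^ 2 ->
  rs <= hi -> 0 <= b -> b * hi <= 1/4 ->
  0 < m -> 0 < a -> 0 < x -> a * x + b * x ^ 2 = rhs lam b m a ->
  rs ^ 2 / hi <= a / m <= hi -> rs ^ 2 / hi <= x / a <= hi ->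
  7/4 * Rabs (ln (a / m) - ln rs) <= 5/4 * Rabs (ln (x / a) - ln rs) + hi ^ 2 / (lam ^ 2 * a).
Proof.
  intros hl hrs hlam hhi hb hbhi hm ha hx hid [w1 w2] [w3 w4].
  pose proof (log_ratio_defect lam rs b m a x hl ltac:(lra) hlam hb hm ha hx hid) as hdef.
  assert (hlo : 0 < rs ^ 2 / hi) by (apply Rdiv_lt_0_compat; [apply pow_lt|]; lra).
  set (rho := a / m) in *. set (rho' := x / a) in *.
  set (v := ln rho - ln rs) in *. set (v' := ln rho' - ln rs) in *.
  set (d := ln (1 + b * rho) - ln (1 + b * rho')) in *.
  assert (hE : rho ^ 2 / (lam ^ 2 * a) <= hi ^ 2 / (lam ^ 2 * a)).
  { apply Rmult_le_compat_r; [apply Rlt_le, Rinv_0_lt_compat, Rmult_lt_0_compat; [apply pow_lt|]; lra|].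
    apply pow_incr; lra. }
  assert (hd : Rabs d <= b * hi * (Rabs v + Rabs v')).
  { assert (0 <= b * rho) by (apply Rmult_le_pos; lra).
    assert (0 <= b * rho') by (apply Rmult_le_pos; lra).
    eapply Rle_trans; [apply (Rabs_ln_sub_le 1); lra|].
    replace (1 + b * rho - (1 + b * rho')) with (b * ((rho - rs) - (rho' - rs))) by ring.
    rewrite Rabs_mult, (Rabs_right b), Rdiv_1_r by lra.
    pose proof (Rabs_sub_le_ln hi rho rs ltac:(lra) ltac:(lra) w2 hhi) as H1.
    pose proof (Rabs_sub_le_ln hi rho' rs ltac:(lra) ltac:(lra) w4 hhi) as H2.
    pose proof (Rabs_triang (rho - rs) (- (rho' - rs))). rewrite Rabs_Ropp in *.
    replace (b * hi * (Rabs v + Rabs v')) with (b * (hi * Rabs v + hi * Rabs v')) by ring.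
    change (ln rho - ln rs) with v in H1. change (ln rho' - ln rs) with v' in H2.
    apply Rmult_le_compat_l; [exact hb|].
    replace (rho - rs - (rho' - rs)) with (rho - rs + - (rho' - rs)) by ring. lra. }
  assert (hd' : Rabs d <= 1/4 * (Rabs v + Rabs v'))
    by (eapply Rle_trans; [exact hd | apply Rmult_le_compat_r; [pose proof (Rabs_pos v); pose proof (Rabs_pos v') |]; lra]).
  clear hd. split_Rabs; lra.
Qed.

Lemma geometric_bound (x : nat -> R) th D q M : 0 <= th < 1 -> 0 < q -> th * q < 1 -> 0 <= D ->
  (forall n, (1 <= n)%nat -> 0 <= x n <= M) ->
  (forall n, (1 <= n)%nat -> x n <= th * x (S n) + D * q ^ n) ->
  forall n, (1 <= n)%nat -> x n <= D / (1 - th * q) * q ^ n.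
Proof.
  intros hth hq hthq hD hM hrec.
  set (K := D / (1 - th * q)).
  assert (hK : 0 <= K) by (apply Rmult_le_pos; [lra | apply Rlt_le, Rinv_0_lt_compat; lra]).
  assert (hKfix : th * q * K + D = K) by (unfold K; field; lra).
  assert (hM0 : 0 <= M) by (destruct (hM 1%nat (le_n _)); lra).
  assert (iterate : forall J n, (1 <= n)%nat -> x n <= K * q ^ n + th ^ J * M).
  { induction J as [|J IH]; intros n hn.
    - pose proof (pow_le q n (Rlt_le _ _ hq)). destruct (hM n hn). simpl. nra.
    - eapply Rle_trans; [apply hrec; exact hn|].
      assert (th * x (S n) <= th * (K * q ^ S n + th ^ J * M))
        by (apply Rmult_le_compat_l; [lra | apply IH; lia]).
      replace (K * q ^ n + th ^ S J * M) with (th * (K * q ^ S n + th ^ J * M) + D * q ^ n)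
        by (rewrite <- hKfix at 2; simpl; ring).
      lra. }
  intros n hn. apply Rnot_lt_le. intro hlt.
  set (eps := x n - K * q ^ n).
  assert (heps : 0 < eps) by (unfold eps; lra).
  destruct (pow_lt_1_zero th ltac:(rewrite Rabs_right; lra) (eps / (M + 1))
              ltac:(apply Rdiv_lt_0_compat; lra)) as [N HN].
  specialize (HN N (le_n _)). rewrite Rabs_right in HN by (apply Rle_ge, pow_le; lra).
  assert (th ^ N * M < eps).
  { apply (Rle_lt_trans _ (th ^ N * (M + 1))); [apply Rmult_le_compat_l; [apply pow_le|]; lra|].
    apply (Rmult_lt_compat_r (M + 1)) in HN; [| lra].
    replace (eps / (M + 1) * (M + 1)) with eps in HN by (field; lra). exact HN. }
  specialize (iterate N n hn). unfold eps in *. lra.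
Qed.

Lemma pow3_le_reg u w : 0 < u -> 0 < w -> u ^ 3 <= w ^ 3 -> u <= w.
Proof.
  intros hu hw h. apply Rnot_lt_le. intro hlt.
  assert (w * w < u * u) by nra. simpl in h. nra.
Qed.

Lemma Rpower_third_pow3 c : 0 < c -> Rpower c (/ 3) ^ 3 = c.
Proof.
  intros hc. rewrite <- Rpower_pow by apply exp_pos.
  rewrite Rpower_mult. replace (/ 3 * INR 3) with 1 by (simpl; field).
  now apply Rpower_1.
Qed.

Definition weight (b : R) (al : nat -> R) (n : nat) : R :=
  al (S n) * al n ^ 2 * (1 + b * (al (S n) / al n)).

Section Convergence.

Variables (lam rs hi b : R) (al : nat -> R).
Hypotheses (hl : 0 < lam) (hrs : 1 < rs) (hlam : rs ^ 3 = lam ^ 2) (hhi : rs <= hi)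
  (hb : 0 <= b) (hbhi : b * hi <= 1/4)
  (hal : positive_solution lam b al) (hwin : in_window (rs ^ 2 / hi) hi al).

Lemma weight_pos n : 0 < weight b al n.
Proof.
  destruct hal as [hpos _]. pose proof (hpos n). pose proof (hpos (S n)).
  assert (0 <= b * (al (S n) / al n)) by (apply Rmult_le_pos; [| apply Rlt_le, Rdiv_lt_0_compat]; lra).
  apply Rmult_lt_0_compat; [apply Rmult_lt_0_compat; [| apply pow_lt] |]; lra.
Qed.

(* Multiply the recursion by [al (S n)] and drop the term [al (S n) ^ 2]. *)
Lemma weight_pow_le n : (lam ^ 2) ^ n * weight b al 0 <= weight b al n.
Proof.
  destruct hal as [hpos hrec].
  assert (hstep : forall k, lam ^ 2 * weight b al k <= weight b al (S k)).
  { intro k. unfold weight. pose proof (hpos k). pose proof (hpos (S k)). pose proof (hpos (S (S k))).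
    replace (al (S (S k)) * al (S k) ^ 2 * (1 + b * (al (S (S k)) / al (S k))))
      with (al (S k) * (al (S k) * al (S (S k)) + b * al (S (S k)) ^ 2)) by (field; lra).
    rewrite hrec. unfold rhs.
    replace (lam ^ 2 * (al (S k) * al k ^ 2 * (1 + b * (al (S k) / al k))))
      with (al (S k) * (lam ^ 2 * al k ^ 2 + lam ^ 2 * b * al k * al (S k))) by (field; lra).
    apply Rmult_le_compat_l; lra. }
  induction n as [|n IH]; [simpl; lra|].
  eapply Rle_trans; [| apply hstep]. rewrite <- tech_pow_Rmult, Rmult_assoc.
  apply Rmult_le_compat_l; [apply pow_le; lra | exact IH].
Qed.

Lemma weight_le n : (1 <= n)%nat -> weight b al n <= hi * (1 + b * hi) * al n ^ 3.
Proof.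
  intros hn. destruct hal as [hpos _]. destruct (hwin n hn) as [_ hup]. pose proof (hpos n).
  assert (hS : al (S n) <= hi * al n) by (apply Rle_div_l in hup; lra).
  assert (b * (al (S n) / al n) <= b * hi) by (apply Rmult_le_compat_l; lra).
  assert (0 <= b * (al (S n) / al n)) by (apply Rmult_le_pos; [| apply Rlt_le, Rdiv_lt_0_compat]; auto).
  unfold weight. replace (hi * (1 + b * hi) * al n ^ 3) with ((hi * al n) * al n ^ 2 * (1 + b * hi)) by ring.
  apply Rmult_le_compat; [| lra | apply Rmult_le_compat_r; [apply pow2_ge_0 | exact hS] | lra].
  apply Rmult_le_pos; [apply Rlt_le, hpos | apply pow2_ge_0].
Qed.

Lemma solution_lower_bound : exists c, 0 < c /\ forall n, (1 <= n)%nat -> c * rs ^ n <= al n.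
Proof.
  assert (hk : 0 < hi * (1 + b * hi)) by (apply Rmult_lt_0_compat; nra).
  set (c0 := weight b al 0 / (hi * (1 + b * hi))).
  assert (hc0 : 0 < c0) by (apply Rdiv_lt_0_compat; [apply weight_pos | exact hk]).
  exists (Rpower c0 (/ 3)). split; [apply exp_pos|]. intros n hn.
  apply pow3_le_reg; [apply Rmult_lt_0_compat; [apply exp_pos | apply pow_lt; lra] | apply hal |].
  rewrite Rpow_mult_distr, Rpower_third_pow3 by exact hc0.
  rewrite <- pow_mult, Nat.mul_comm, pow_mult, hlam.
  apply (Rmult_le_reg_r (hi * (1 + b * hi))); [exact hk|].
  unfold c0. replace (weight b al 0 / (hi * (1 + b * hi)) * (lam ^ 2) ^ n * (hi * (1 + b * hi)))
    with ((lam ^ 2) ^ n * weight b al 0) by (field; split; nra).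
  pose proof (weight_pow_le n). pose proof (weight_le n hn). nra.
Qed.

Lemma log_ratio_geometric :
  exists K, forall n, (1 <= n)%nat -> Rabs (ln (al (S n) / al n) - ln rs) <= K * (/ rs) ^ n.
Proof.
  destruct solution_lower_bound as [c [hc hgrow]].
  destruct hal as [hpos hrec].
  assert (hl2 : 0 < lam ^ 2) by (apply pow_lt; lra).
  set (D := 4/7 * (hi ^ 2 / (lam ^ 2 * c * rs))).
  assert (hD : 0 <= D).
  { apply Rmult_le_pos; [lra|]. apply Rlt_le, Rdiv_lt_0_compat; [apply pow_lt; lra |].
    apply Rmult_lt_0_compat; [apply Rmult_lt_0_compat|]; lra. }
  assert (hq : 0 < / rs) by (apply Rinv_0_lt_compat; lra).
  assert (hq1 : / rs < 1) by (rewrite <- Rinv_1; apply Rinv_lt_contravar; lra).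
  exists (D / (1 - 5/7 * / rs)).
  apply (geometric_bound (fun n => Rabs (ln (al (S n) / al n) - ln rs)) (5/7) D (/ rs) (ln hi - ln rs));
    try lra.
  - intros n hn. split; [apply Rabs_pos|].
    destruct (hwin n hn) as [w1 w2].
    assert (hlo : 0 < rs ^ 2 / hi) by (apply Rdiv_lt_0_compat; [apply pow_lt|]; lra).
    pose proof (ln_le _ _ hlo w1). pose proof (ln_le (al (S n) / al n) hi ltac:(lra) w2).
    rewrite ln_div, ln_pow in * by (try apply pow_lt; lra). simpl INR in *.
    apply Rabs_le. lra.
  - intros n hn.
    pose proof (log_ratio_contraction lam rs hi b (al n) (al (S n)) (al (S (S n))) hl hrs hlam hhi hb hbhi
                  (hpos _) (hpos _) (hpos _) (hrec n) (hwin n hn) (hwin (S n) ltac:(lia))).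
    assert (hi ^ 2 / (lam ^ 2 * al (S n)) <= 7/4 * D * (/ rs) ^ n).
    { specialize (hgrow (S n) ltac:(lia)). pose proof (hpos (S n)).
      assert (0 < c * rs ^ S n) by (apply Rmult_lt_0_compat; [| apply pow_lt]; lra).
      unfold D. rewrite pow_inv.
      replace (7 / 4 * (4 / 7 * (hi ^ 2 / (lam ^ 2 * c * rs))) * / rs ^ n)
        with (hi ^ 2 / (lam ^ 2 * (c * rs ^ S n))) by (simpl; field; split; [apply pow_nonzero|]; lra).
      apply Rmult_le_compat_l; [apply pow2_ge_0|].
      apply Rinv_le_contravar; [nra|]. apply Rmult_le_compat_l; lra. }
    lra.
Qed.

Lemma normalized_limit : exists C, 0 < C /\ is_lim_seq (fun n => al n / rs ^ n) C.
Proof.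
  destruct log_ratio_geometric as [K HK].
  destruct hal as [hpos _].
  set (v n := ln (al (S n) / al n) - ln rs).
  set (K' := Rmax (Rabs K) (Rabs (v 0%nat))).
  assert (hq : 0 < / rs) by (apply Rinv_0_lt_compat; lra).
  assert (hq1 : / rs < 1) by (rewrite <- Rinv_1; apply Rinv_lt_contravar; lra).
  assert (hv : forall n, norm (v n) <= K' * (/ rs) ^ n).
  { intro n. change (norm (v n)) with (Rabs (v n)). destruct n as [|n].
    - simpl. rewrite Rmult_1_r. apply Rmax_r.
    - eapply Rle_trans; [apply (HK (S n)); lia|].
      apply Rmult_le_compat_r; [apply pow_le; lra|].
      eapply Rle_trans; [apply RRle_abs | apply Rmax_l]. }
  assert (hsum : ex_series v).
  { apply (ex_series_le v (fun n => K' * (/ rs) ^ n)); [exact hv|].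
    apply (@ex_series_scal_l R_AbsRing R_NormedModule K' (fun n => (/ rs) ^ n)).
    apply ex_series_geom. rewrite Rabs_right; lra. }
  destruct hsum as [sv HS].
  (* [ln (al n / rs ^ n)] telescopes into the partial sums of [v]. *)
  set (L n := ln (al n) - INR n * ln rs).
  assert (hL : forall n, L (S n) = L 0%nat + sum_n v n).
  { induction n as [|n IH].
    - rewrite sum_O. unfold L, v. rewrite ln_div by auto. simpl INR. ring.
    - rewrite sum_Sn. change (plus (sum_n v n) (v (S n))) with (sum_n v n + v (S n)).
      rewrite <- Rplus_assoc, <- IH. unfold L, v. rewrite ln_div by auto. rewrite !S_INR. ring. }
  exists (exp (L 0%nat + sv)). split; [apply exp_pos|].
  apply is_lim_seq_incr_1.
  apply (is_lim_seq_ext (fun n => exp (L 0%nat + sum_n v n))).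
  - intro n. rewrite <- hL. unfold L, Rminus. rewrite exp_plus, exp_ln, exp_Ropp by auto.
    now rewrite <- (Rpower_pow (S n) rs) by lra.
  - apply (is_lim_seq_continuous exp); [apply derivable_continuous_pt, derivable_exp|].
    apply is_lim_seq_plus'; [apply is_lim_seq_const | exact HS].
Qed.

Lemma ratio_limit : is_lim_seq (fun n => al (S n) / al n) rs.
Proof.
  destruct normalized_limit as [C [hC HC]].
  destruct hal as [hpos _].
  apply (is_lim_seq_ext (fun n => al (S n) / rs ^ S n / (al n / rs ^ n) * rs)).
  - intro n. assert (0 < rs ^ n) by (apply pow_lt; lra). pose proof (hpos n).
    simpl. field. repeat split; lra.
  - replace (Finite rs) with (Finite (C / C * rs)) by (f_equal; field; lra).
    apply is_lim_seq_mult'; [| apply is_lim_seq_const].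
    apply is_lim_seq_div'; [now apply (is_lim_seq_incr_1 (fun n => al n / rs ^ n)) | exact HC | lra].
Qed.

End Convergence.

Lemma next_b0_mono lam m m' a a' : 0 <= m -> m <= m' -> 0 < a' -> a' <= a ->
  next lam 0 m a <= next lam 0 m' a'.
Proof.
  intros hm hmm' ha' haa'. rewrite !next_b0 by lra.
  replace ((a + lam ^ 2 * m ^ 2) / a) with (1 + lam ^ 2 * m ^ 2 / a) by (field; lra).
  replace ((a' + lam ^ 2 * m' ^ 2) / a') with (1 + lam ^ 2 * m' ^ 2 / a') by (field; lra).
  apply Rplus_le_compat_l, Rmult_le_compat.
  - apply Rmult_le_pos; apply pow2_ge_0.
  - apply Rlt_le, Rinv_0_lt_compat; lra.
  - apply Rmult_le_compat_l; [apply pow2_ge_0 | apply pow_incr; lra].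
  - apply Rinv_le_contravar; lra.
Qed.

Lemma next_b0_m0 lam a : 0 < a -> next lam 0 0 a = 1.
Proof. intros ha. rewrite next_b0 by exact ha. field. lra. Qed.

(* At [b = 0], [next] increases with [m] and decreases with [a], so [shift]
   reverses the order [p <= q] iff [fst p <= fst q] and [snd q <= snd p]. *)
Lemma orbit_b0_even_le lam (p q : R * R) (k : nat) : 0 <= fst p -> 0 < snd q ->
  fst p <= fst q -> snd q <= snd p ->
  fst (orbit lam 0 p (2 * k)%nat) <= fst (orbit lam 0 q (2 * k)%nat) /\
  snd (orbit lam 0 q (2 * k)%nat) <= snd (orbit lam 0 p (2 * k)%nat).
Proof.
  intros hp hq h1 h2. induction k as [|k [IH1 IH2]]; [now split|].
  replace (2 * S k)%nat with (S (S (2 * k))) by lia. cbn [orbit shift fst snd].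
  destruct (orbit_pos lam 0 p (2 * k) (Rle_refl 0) hp ltac:(lra)) as [p1 p2].
  destruct (orbit_pos lam 0 q (2 * k) (Rle_refl 0) ltac:(lra) hq) as [q1 q2].
  assert (hnext : next lam 0 (fst (orbit lam 0 p (2 * k)%nat)) (snd (orbit lam 0 p (2 * k)%nat))
                  <= next lam 0 (fst (orbit lam 0 q (2 * k)%nat)) (snd (orbit lam 0 q (2 * k)%nat)))
    by (apply next_b0_mono; lra).
  split; [exact hnext|]. apply next_b0_mono; try lra. now apply next_pos.
Qed.

Lemma high_escape_b0 lam lo hi : 1 < lam -> 0 < hi -> escapes lam lo hi 0 hi true.
Proof.
  intros hl hhi. exists 2%nat. split; [lia|].
  unfold escape; cbn [orbit shift fst snd Nat.even Bool.eqb].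
  rewrite next_b0_m0, next_b0, Rdiv_1_r by lra.
  assert (hi ^ 2 <= lam ^ 2 * hi ^ 2)
    by (rewrite <- (Rmult_1_l (hi ^ 2)) at 1; apply Rmult_le_compat_r; [apply pow2_ge_0 | simpl; nra]).
  simpl in *. nra.
Qed.

Section BetaZero.

Variables (lam rs hi : R).
Hypotheses (hl : 1 < lam) (hrs : 1 < rs) (hlam : rs ^ 3 = lam ^ 2) (hhi : rs <= hi).

(* Starting from [(0, 1)], the even-indexed ratios stay [<= 1] (compare with the
   orbit from [(1, 1)], which is the same orbit shifted by one), while inside the
   window the ratios would tend to [rs > 1]. *)
Lemma escapes_b0_one :
  escapes lam (rs ^ 2 / hi) hi 0 1 true \/ escapes lam (rs ^ 2 / hi) hi 0 1 false.
Proof.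
  apply NNPP. intro hnone. apply (Rlt_not_le _ _ hrs).
  set (al n := snd (orbit lam 0 (0, 1) n)).
  assert (hpos : forall n, 0 < al n) by (intro n; apply orbit_pos; simpl; lra).
  assert (hwin : in_window (rs ^ 2 / hi) hi al).
  { apply (window_of_no_escape lam rs hi 0 (1 / 2) (Rle_refl 0) ltac:(lra) ltac:(lra) 1 Rlt_0_1).
    - rewrite Rmin_left; lra.
    - intro h. apply hnone. now left.
    - intro h. apply hnone. now right. }
  assert (hlim := ratio_limit lam rs hi 0 al ltac:(lra) hrs hlam ltac:(lra) (Rle_refl 0) ltac:(lra)
                    (orbit_positive_solution lam 0 1 (Rle_refl 0) Rlt_0_1) hwin).
  assert (hshift : forall k, snd (orbit lam 0 (1, 1) k) = al (S k)).
  { intro k. unfold al. rewrite orbit_succ_r. unfold shift; cbn [fst snd]. now rewrite next_b0_m0 by lra. }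
  assert (hle : forall k : nat, al (S (2 * k)) / al (2 * k)%nat <= 1).
  { intro k. destruct (orbit_b0_even_le lam (0, 1) (1, 1) k) as [_ h]; cbn [fst snd]; try lra.
    rewrite hshift in h. change (snd (orbit lam 0 (0, 1) (2 * k))) with (al (2 * k)%nat) in h.
    apply Rle_div_l; [apply hpos |]. lra. }
  apply (is_lim_seq_le (fun k : nat => al (S (2 * k)) / al (2 * k)%nat) (fun _ => 1) rs 1 hle).
  - apply (is_lim_seq_subseq (fun n => al (S n) / al n) rs (fun k => (2 * k)%nat)); [| exact hlim].
    apply eventually_subseq. intro n. lia.
  - apply is_lim_seq_const.
Qed.

Lemma low_escape_b0 : exists A, 0 < A /\ escapes lam (rs ^ 2 / hi) hi 0 A false.
Proof.
  destruct escapes_b0_one as [[n [hn Hn]] | hlow]; [| now exists 1; split; [lra|]].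
  destruct (orbit_continuity_pt lam (fun _ => 0) (fun t => t) (fun _ => 1) 0 n
              (continuity_pt_cst 0 0) (continuity_pt_id 0) (continuity_pt_cst 1 0)
              (Rle_refl 0) (Rle_refl 0) Rlt_0_1) as [c1 c2].
  destruct (escape_nbhd (rs ^ 2 / hi) hi _ (fun t => orbit lam 0 (t, 1) n) 0 c1 c2 Hn) as [d [hd Hd]].
  exists (d / 2). split; [lra|]. exists (S n). split; [lia|].
  rewrite orbit_succ_r. unfold shift; cbn [fst snd]. rewrite next_b0_m0 by lra.
  replace (Bool.eqb false (Nat.even (S n))) with (Bool.eqb true (Nat.even n))
    by (rewrite Nat.even_succ, <- Nat.negb_even; now destruct (Nat.even n)).
  apply Hd. rewrite Rminus_0_r, Rabs_right; lra.
Qed.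

End BetaZero.

Lemma window_constants rs : 1 < rs ->
  exists hi th, 0 < th < 1 /\ 5/4 * rs <= hi /\ / th + rs ^ 3 / hi < rs ^ 2.
Proof.
  intros hrs. set (g := rs ^ 2 - 1).
  assert (hg : 0 < g) by (unfold g; simpl; nra).
  assert (hrs3 : 0 < rs ^ 3) by (apply pow_lt; lra).
  exists (5/4 * rs + 4 * rs ^ 3 / g), (2 / (2 + g)).
  assert (h4 : 0 < 4 * rs ^ 3 / g) by (apply Rdiv_lt_0_compat; lra).
  repeat split.
  - apply Rdiv_lt_0_compat; lra.
  - apply Rlt_div_l; lra.
  - lra.
  - replace (/ (2 / (2 + g))) with (1 + g / 2) by (field; lra).
    assert (rs ^ 3 / (5/4 * rs + 4 * rs ^ 3 / g) < g / 4).
    { apply Rlt_div_l; [lra|]. replace (g / 4 * (5 / 4 * rs + 4 * rs ^ 3 / g)) with (5/16 * g * rs + rs ^ 3)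
        by (field; lra). nra. }
    unfold g in *. lra.
Qed.

Lemma small_b_normalized_limit lam rs : 1 < lam -> 1 < rs -> rs ^ 3 = lam ^ 2 ->
  exists b0, 0 < b0 /\ forall b, 0 <= b < b0 ->
    exists a0, 0 < a0 /\ exists C, 0 < C /\ is_lim_seq (fun n => snd (orbit lam b (0, a0) n) / rs ^ n) C.
Proof.
  intros hl hrs hlam.
  destruct (window_constants rs hrs) as (hi & th & [hth hth1] & hhi & hslack).
  assert (hrs3 : 0 < rs ^ 3) by (apply pow_lt; lra).
  destruct (low_escape_b0 lam rs hi hl hrs hlam ltac:(lra)) as [A [hA hlowA]].
  pose proof (high_escape_b0 lam (rs ^ 2 / hi) hi hl ltac:(lra)) as hhighB.
  destruct (escapes_nbhd lam _ _ false (fun t => t) (fun _ => A) 0 (continuity_pt_id 0) (continuity_pt_cst A 0)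
              (Rle_refl 0) hA hlowA) as [dA [hdA HA]].
  destruct (escapes_nbhd lam _ _ true (fun t => t) (fun _ => hi) 0 (continuity_pt_id 0) (continuity_pt_cst hi 0)
              (Rle_refl 0) ltac:(lra) hhighB) as [dB [hdB HB]].
  set (slack := rs ^ 2 - / th - rs ^ 3 / hi).
  (* [b0] keeps both escapes and meets the remaining hypotheses of [shooting]. *)
  assert (hmin : 0 < Rmin 1 (Rmin A hi)) by (repeat apply Rmin_glb_lt; lra).
  exists (Rmin (Rmin dA dB) (Rmin (1 / (4 * hi)) (Rmin (slack / rs ^ 3) ((1 - th) * Rmin 1 (Rmin A hi))))).
  split.
  { repeat apply Rmin_glb_lt; try lra; apply Rdiv_lt_0_compat || apply Rmult_lt_0_compat; unfold slack; lra. }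
  intros b [hb hb0].
  apply Rmin_Rgt_l in hb0 as [hbd hb0]. apply Rmin_Rgt_l in hbd as [hbA hbB].
  apply Rmin_Rgt_l in hb0 as [hb1 hb0]. apply Rmin_Rgt_l in hb0 as [hb2 hb3].
  apply Rlt_div_r in hb1; [| lra]. apply Rlt_div_r in hb2; [| lra].
  destruct (shooting lam rs hi b th hrs hlam hhi hb ltac:(lra) hth hth1 ltac:(unfold slack in hb2; lra) A hi)
    as [a0 [ha0 hwin]]; try lra.
  - apply HA. rewrite Rminus_0_r, Rabs_right; lra.
  - apply HB. rewrite Rminus_0_r, Rabs_right; lra.
  - exists a0. split; [exact ha0|].
    apply (normalized_limit lam rs hi b); try lra; [| exact hwin].
    now apply orbit_positive_solution.
Qed.

Lemma Rpower_two_thirds lam : 1 < lam -> 1 < Rpower lam (2 / 3) /\ Rpower lam (2 / 3) ^ 3 = lam ^ 2.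
Proof.
  intros hl. split.
  - rewrite <- (Rpower_O lam) by lra. apply Rpower_lt; lra.
  - rewrite <- Rpower_pow, Rpower_mult, <- Rpower_pow by (try apply exp_pos; lra).
    f_equal. simpl. field.
Qed.

Lemma astar_normalized lam beta a0 C j : 1 < lam -> 0 <= beta -> 0 < a0 -> 0 < C ->
  astar lam beta a0 j / (C * Rpower lam (- INR j / 3))
  = snd (orbit lam (beta / lam) (0, a0) j) / Rpower lam (2 / 3) ^ j / C.
Proof.
  intros hl hbeta ha0 hC.
  unfold astar, alpha. rewrite alpha_pair_orbit by lra.
  assert (e : lam ^ j * Rpower lam (- INR j / 3) = Rpower lam (2 / 3) ^ j).
  { rewrite <- !Rpower_pow, <- Rpower_plus, Rpower_mult by (try apply exp_pos; lra). f_equal. field. }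
  assert (0 < lam ^ j) by (apply pow_lt; lra).
  assert (0 < Rpower lam (- INR j / 3)) by apply exp_pos.
  rewrite <- e. field. repeat split; lra.
Qed.

Theorem theorem1 (lam : R) (hlam : 1 < lam) :
  exists beta0 : R, 0 < beta0 /\
    forall beta : R, 0 <= beta -> beta < beta0 ->
      exists a0 : R, 0 < a0 /\
        exists C : R, 0 < C /\
          is_lim_seq
            (fun j : nat => astar lam beta a0 j / (C * Rpower lam (- INR j / 3)))
            1.
Proof.
  destruct (Rpower_two_thirds lam hlam) as [hrs hrs3].
  destruct (small_b_normalized_limit lam _ hlam hrs hrs3) as [b0 [hb0 Hb0]].
  exists (lam * b0). split; [apply Rmult_lt_0_compat; lra|].
  intros beta hbeta hbeta0.
  assert (hb : 0 <= beta / lam < b0).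
  { split; [apply Rmult_le_pos; [lra | apply Rlt_le, Rinv_0_lt_compat; lra]|].
    apply Rlt_div_l; lra. }
  destruct (Hb0 _ hb) as [a0 [ha0 [C [hC HC]]]].
  exists a0. split; [exact ha0|]. exists C. split; [exact hC|].
  apply (is_lim_seq_ext (fun j => snd (orbit lam (beta / lam) (0, a0) j) / Rpower lam (2 / 3) ^ j / C)).
  - intro j. symmetry. now apply astar_normalized.
  - replace (Finite 1) with (Finite (C / C)) by (f_equal; field; lra).
    apply is_lim_seq_div'; [exact HC | apply is_lim_seq_const | lra].
Qed.
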